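(* Let $x_1\in(0,1)$ and define $x_{n+1}=\frac{(1+x_n)^2}{4}$ for $n\ge1$. Then $\sum_{n\ge1}n(x_{n+1}-x_n)=+\infty$. *)

From Stdlib Require Import Reals.
From Coquelicot Require Import Coquelicot.
Open Scope R_scope.

(* The sequence x_{n+1} = (1 + x_n)^2 / 4, shifted to start at index 0:
   xseq x1 0 = x_1, xseq x1 k = x_{k+1}. *)
Fixpoint xseq (x1 : R) (k : nat) : R :=
  match k with
  | O => x1
  | S k' => (1 + xseq x1 k') ^ 2 / 4
  end.

(** With [e_k = 1 - x_k] the recursion reads [e_(k+1) = e_k - e_k^2/4], so
    [1/e_(k+1) <= 1/e_k + 1/2] and [e_k] decays no faster than [C/(k+1)].
    The [k]-th term [(k+1)(x_(k+1) - x_k) = (k+1) e_k^2/4] is therefore at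
    least a constant times [1/(k+1)], and the harmonic series diverges. *)

From Stdlib Require Import Reals Lra Lia.
From Coquelicot Require Import Coquelicot.
Open Scope R_scope.

Lemma inv_sub_sqr_div4_le (u : R) : 0 < u <= 2 -> / (u - u ^ 2 / 4) <= / u + / 2.
Proof.
  intros Hu.
  replace (/ (u - u ^ 2 / 4)) with (/ u + / 2 + (u - 2) / (2 * (4 - u))).
  2: { field; repeat split; try lra; nra. }
  assert (0 < / (2 * (4 - u))) by (apply Rinv_0_lt_compat; lra).
  unfold Rdiv; nra.
Qed.

Lemma ln_succ_sub_ln_le (x : R) : 0 < x -> ln (x + 1) - ln x <= / x.
Proof.
  intros Hx.
  assert (Hinv : 0 < / x) by (apply Rinv_0_lt_compat; exact Hx).
  replace (x + 1) with (x * (1 + / x)) by (field; lra).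
  rewrite ln_mult by lra.
  pose proof (exp_ineq1_le (ln (1 + / x))) as Hexp.
  rewrite exp_ln in Hexp by lra.
  lra.
Qed.

Lemma ln_le_sum_inv (N : nat) : ln (INR (S (S N))) <= sum_n (fun k => / INR (S k)) N.
Proof.
  induction N as [|N IH].
  - rewrite sum_O; simpl.
    pose proof (ln_succ_sub_ln_le 1 Rlt_0_1) as H.
    rewrite ln_1, Rinv_1 in H; lra.
  - rewrite sum_Sn; change plus with Rplus.
    pose proof (ln_succ_sub_ln_le (INR (S (S N))) (lt_0_INR _ (Nat.lt_0_succ _))) as H.
    rewrite <- S_INR in H; lra.
Qed.

Lemma is_lim_seq_sum_inv : is_lim_seq (sum_n (fun k => / INR (S k))) p_infty.
Proof.
  apply (is_lim_seq_le_p_loc (fun N => ln (INR (S (S N))))).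
  - exists O; intros N _; apply ln_le_sum_inv.
  - apply (is_lim_comp_seq ln _ p_infty).
    + exact is_lim_ln_p.
    + exists O; discriminate.
    + apply (is_lim_seq_ext (fun n => INR (n + 2))); [intros n; f_equal; lia |].
      apply is_lim_seq_incr_n, is_lim_seq_INR.
Qed.

Lemma is_lim_seq_sum_ge_inv (u : nat -> R) (c : R) :
  0 < c -> (forall k, c / INR (S k) <= u k) -> is_lim_seq (sum_n u) p_infty.
Proof.
  intros Hc Hu.
  apply (is_lim_seq_le_p_loc (fun N => c * sum_n (fun k => / INR (S k)) N)).
  - exists O; intros N _.
    rewrite <- (sum_n_scal_l (V := R_ModuleSpace) c); apply sum_n_m_le, Hu.
  - replace p_infty with (Rbar_mult c p_infty).
    + apply is_lim_seq_scal_l, is_lim_seq_sum_inv.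
    + apply is_Rbar_mult_unique, is_Rbar_mult_sym, is_Rbar_mult_p_infty_pos.
      exact Hc.
Qed.

Section Iteration.

Variable x1 : R.

Lemma xseq_succ_sub (k : nat) : xseq x1 (S k) - xseq x1 k = (1 - xseq x1 k) ^ 2 / 4.
Proof. simpl; field. Qed.

Lemma one_sub_xseq_succ (k : nat) :
  1 - xseq x1 (S k) = (1 - xseq x1 k) - (1 - xseq x1 k) ^ 2 / 4.
Proof. simpl; field. Qed.

Hypothesis hx1 : 0 < x1 < 1.

Lemma one_sub_xseq_bounds (k : nat) : 0 < 1 - xseq x1 k < 1.
Proof.
  induction k as [|k IH]; [simpl; lra |].
  rewrite one_sub_xseq_succ; nra.
Qed.

Lemma inv_one_sub_xseq_le (k : nat) : / (1 - xseq x1 k) <= / (1 - x1) + INR k / 2.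
Proof.
  induction k as [|k IH]; [simpl; lra |].
  rewrite one_sub_xseq_succ, S_INR.
  pose proof (one_sub_xseq_bounds k).
  pose proof (inv_sub_sqr_div4_le (1 - xseq x1 k) ltac:(lra)).
  lra.
Qed.

Let A := / (1 - x1) + / 2.

Lemma A_pos : 0 < A.
Proof. pose proof (Rinv_0_lt_compat (1 - x1) ltac:(lra)); unfold A; lra. Qed.

Lemma one_sub_xseq_ge (k : nat) : / (A * INR (S k)) <= 1 - xseq x1 k.
Proof.
  pose proof (one_sub_xseq_bounds k).
  pose proof (inv_one_sub_xseq_le k).
  pose proof (pos_INR k).
  pose proof (Rinv_0_lt_compat (1 - x1) ltac:(lra)).
  rewrite <- (Rinv_inv (1 - xseq x1 k)).
  apply Rinv_le_contravar; [apply Rinv_0_lt_compat; lra |].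
  rewrite S_INR; unfold A; nra.
Qed.

Lemma xseq_weighted_increment_ge (k : nat) :
  / (4 * A ^ 2) / INR (S k) <= INR (S k) * (xseq x1 (S k) - xseq x1 k).
Proof.
  assert (Hn : 0 < INR (S k)) by apply (lt_0_INR _ (Nat.lt_0_succ k)).
  pose proof A_pos.
  rewrite xseq_succ_sub.
  replace (/ (4 * A ^ 2) / INR (S k)) with (INR (S k) * ((/ (A * INR (S k))) ^ 2 / 4))
    by (field; lra).
  apply Rmult_le_compat_l; [lra |].
  apply Rmult_le_compat_r; [lra |].
  apply pow_incr; split; [| apply one_sub_xseq_ge].
  apply Rlt_le, Rinv_0_lt_compat, Rmult_lt_0_compat; lra.
Qed.

End Iteration.

Theorem lemma5p1 (x1 : R) (hx1 : 0 < x1 < 1) :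
  is_lim_seq
    (fun N : nat => sum_n (fun k : nat => INR (S k) * (xseq x1 (S k) - xseq x1 k)) N)
    p_infty.
Proof.
  eapply is_lim_seq_sum_ge_inv; [| exact (xseq_weighted_increment_ge x1 hx1)].
  pose proof (A_pos x1 hx1).
  apply Rinv_0_lt_compat; simpl; nra.
Qed.
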